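(* Let $D,W,V,K$ be positive integers, $N:=W+VK$, and let $\mathcal{D}\in\mathbb{R}^{W\times VK}$ with $\mathrm{rank}(\mathcal{D})=D$ and $\mathrm{rank}(\mathcal{D}_{1:D,1:D})=D$. Fix $\sharp\in\{\mathrm{st},\mathrm{m}\}$ and index pairs $\theta^{(\sharp)}(1),\dots,\theta^{(\sharp)}(J)$, lying in $\{1,\dots,W\}^{\times2}$ if $\sharp=\mathrm{st}$ and in $\{1,\dots,VK\}^{\times2}$ if $\sharp=\mathrm{m}$, together with known values $c_1,\dots,c_J\in\mathbb{R}$. A matrix $G\in\mathbb{R}^{N\times N}$ is called compatible with the a priori knowledge if $G=P^TP$ for some $P=(P_{\mathrm{st}}\,|\,P_{\mathrm{m}})$ with $P_{\mathrm{st}}\in\mathbb{R}^{D\times W}$, $P_{\mathrm{m}}\in\mathbb{R}^{D\times VK}$, such that $P_{\mathrm{st}}^TP_{\mathrm{m}}=\mathcal{D}$ and $(G_\sharp)_{\theta^{(\sharp)}(j)}=c_j$ for $j=1,\dots,J$, where $G_{\mathrm{st}}=P_{\mathrm{st}}^TP_{\mathrm{st}}$ and $G_{\mathrm{m}}=P_{\mathrm{m}}^TP_{\mathrm{m}}$; assume that at least one compatible $G$ exists. Define $\mathcal{M}:=\bigl(\mathrm{vec}(\mathcal{N}^{(\sharp)}_1)\,|\cdots|\,\mathrm{vec}(\mathcal{N}^{(\sharp)}_J)\bigr)$, where $$\mathcal{N}^{(\mathrm{st})}_j:=\tfrac12\Bigl(\bigl(\mathcal{D}_{\theta^{(\mathrm{st})}(j)_1,1:D}\bigr)^T\mathcal{D}_{\theta^{(\mathrm{st})}(j)_2,1:D}+\bigl(\mathcal{D}_{\theta^{(\mathrm{st})}(j)_2,1:D}\bigr)^T\mathcal{D}_{\theta^{(\mathrm{st})}(j)_1,1:D}\Bigr),$$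 $$\mathcal{N}^{(\mathrm{m})}_j:=\tfrac12\Bigl(\mathcal{D}_{1:D,\theta^{(\mathrm{m})}(j)_1}\bigl(\mathcal{D}_{1:D,\theta^{(\mathrm{m})}(j)_2}\bigr)^T+\mathcal{D}_{1:D,\theta^{(\mathrm{m})}(j)_2}\bigl(\mathcal{D}_{1:D,\theta^{(\mathrm{m})}(j)_1}\bigr)^T\Bigr).$$ Then the following are equivalent: (i) there exists only one matrix $G$ with $\mathrm{rank}(G)=D$ which is compatible with the a priori knowledge; (ii) $\mathrm{rank}(\mathcal{M})=D(D+1)/2$.
   Context: $\mathcal{D}_{1:D,1:D}$ is the top-left $D\times D$ submatrix of $\mathcal{D}$; $\mathcal{D}_{i,1:D}$ is the row vector formed by the first $D$ entries of row $i$ of $\mathcal{D}$; $\mathcal{D}_{1:D,l}$ is the column vector formed by the first $D$ entries of column $l$ of $\mathcal{D}$. For an index pair $\theta(j)$, $\theta(j)_1,\theta(j)_2$ denote its two components. $\mathrm{vec}(X)$ stacks the columns of $X$ into a single column vector. *)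

From HB Require Import structures.
From mathcomp Require Import all_boot all_order all_algebra.
From mathcomp Require Import reals.
Set Implicit Arguments. Unset Strict Implicit. Unset Printing Implicit Defensive.
Import Order.TTheory GRing.Theory Num.Theory.
Local Open Scope ring_scope.

Section Defs.
Variable R : realType.

(* Entry of a matrix at 0-based nat indices (i, j); 0 if out of range.
   Used to express D_{1:D,1:D}, D_{i,1:D}, D_{1:D,l} without dependent
   bound proofs (indices are always in range under the theorem's hypotheses). *)
Definition mxe {m n} (A : 'M[R]_(m, n)) (i j : nat) : R :=
  match (insub i : option 'I_m), (insub j : option 'I_n) with
  | Some i', Some j' => A i' j'
  | _, _ => 0
  end.

Definition topleft (D : nat) {m n} (A : 'M[R]_(m, n)) : 'M[R]_D :=
  \matrix_(k < D, l < D) mxe A k l.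
Definition rowD (D : nat) {m n} (A : 'M[R]_(m, n)) (i : nat) : 'rV[R]_D :=
  \row_(l < D) mxe A i l.
Definition colD (D : nat) {m n} (A : 'M[R]_(m, n)) (l : nat) : 'cV[R]_D :=
  \col_(k < D) mxe A k l.

Inductive sharp := St | Mo.

(* range of the (0-based) indices of theta *)
Definition bnd (s : sharp) (W n : nat) : nat := if s is St then W else n.

Definition Nst (D : nat) {m n} (A : 'M[R]_(m, n)) (p : nat * nat) : 'M[R]_D :=
  2^-1 *: ((rowD D A p.1)^T *m rowD D A p.2 + (rowD D A p.2)^T *m rowD D A p.1).
Definition Nm (D : nat) {m n} (A : 'M[R]_(m, n)) (p : nat * nat) : 'M[R]_D :=
  2^-1 *: (colD D A p.1 *m (colD D A p.2)^T + colD D A p.2 *m (colD D A p.1)^T).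
Definition Nsh (s : sharp) (D : nat) {m n} (A : 'M[R]_(m, n)) (p : nat * nat)
  : 'M[R]_D := if s is St then Nst D A p else Nm D A p.

(* vec: column stacking *)
Definition vecmx {m n} (X : 'M[R]_(m, n)) : 'cV[R]_(n * m) := (mxvec X^T)^T.

Definition Mcal (s : sharp) (D : nat) {m n J} (A : 'M[R]_(m, n))
  (theta : 'I_J -> nat * nat) : 'M[R]_(D * D, J) :=
  \matrix_(k, j) vecmx (Nsh s D A (theta j)) k 0.

Definition compatible (s : sharp) (D W n J : nat) (A : 'M[R]_(W, n))
  (theta : 'I_J -> nat * nat) (c : 'I_J -> R) (G : 'M[R]_(W + n)) : Prop :=
  exists (Pst : 'M[R]_(D, W)) (Pm : 'M[R]_(D, n)),
    [/\ G = (row_mx Pst Pm)^T *m row_mx Pst Pm,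
        Pst^T *m Pm = A
      & forall j : 'I_J,
          match s with
          | St => mxe (Pst^T *m Pst) (theta j).1 (theta j).2
          | Mo => mxe (Pm^T *m Pm) (theta j).1 (theta j).2
          end = c j].

End Defs.

From HB Require Import structures.
From mathcomp Require Import all_boot all_order all_algebra.
From mathcomp Require Import reals ring lra zify.
Set Implicit Arguments. Unset Strict Implicit. Unset Printing Implicit Defensive.
Import Order.TTheory GRing.Theory Num.Theory.
Local Open Scope ring_scope.

(* Case st; the case m is the case st for A^T, where A is the paper's matrix
   calD.  Write a compatible factor as P = (X | Y), so that X^T Y = A, and let
   B be the first D columns of Y.  As A_{1:D,1:D} = (first D columns of X)^T B
   is invertible, so is B, and X^T = A_{:,1:D} B^-1, Y = B A_{1:D,1:D}^-1 A_{1:D,:}.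
   Hence G is determined by S = (B^T B)^-1, and the a priori knowledge becomes
   the linear equations tr (S N_j) = c_j.  If the N_j span the symmetric
   matrices, i.e. rank M = D(D+1)/2, then S, and with it G, is unique.
   Otherwise a symmetric E <> 0 is orthogonal to all N_j; for small t > 0 the
   matrix 1 + t B E B^T is positive definite, hence equal to Q^T Q (Cholesky),
   and (Q X | Q^-T Y) is a second compatible factor whose G differs from the
   first one by t A_{:,1:D} E A_{:,1:D}^T <> 0. *)

Section SelfDot.
Variable R : realDomainType.

Lemma bilinmxE n (x y : 'rV[R]_n) (F : 'M[R]_n) :
  (x *m F *m y^T) 0 0 = \sum_i \sum_j x 0 i * F i j * y 0 j.
Proof.
rewrite mxE; under eq_bigr => j _ do rewrite !mxE mulr_suml.
by rewrite exchange_big.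
Qed.

Lemma mulmx_trE n (x : 'rV[R]_n) : (x *m x^T) 0 0 = \sum_i x 0 i ^+ 2.
Proof. by rewrite mxE; apply: eq_bigr => i _; rewrite mxE expr2. Qed.

Lemma mulmx_tr_ge0 n (x : 'rV[R]_n) : 0 <= (x *m x^T) 0 0.
Proof. by rewrite mulmx_trE sumr_ge0 // => i _; rewrite sqr_ge0. Qed.

Lemma mulmx_tr_eq0 n (x : 'rV[R]_n) : ((x *m x^T) 0 0 == 0) = (x == 0).
Proof.
apply/idP/eqP => [|->]; last by rewrite mul0mx mxE.
rewrite mulmx_trE psumr_eq0 => [/allP x0|i _]; last exact: sqr_ge0.
apply/rowP => i; rewrite mxE; apply/eqP.
by rewrite -sqrf_eq0; apply: x0; rewrite mem_index_enum.
Qed.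

Lemma mulmx_tr_gt0 n (x : 'rV[R]_n) : x != 0 -> 0 < (x *m x^T) 0 0.
Proof. by rewrite lt_def mulmx_tr_ge0 mulmx_tr_eq0 => ->. Qed.

End SelfDot.

Definition posdef (R : numDomainType) n (M : 'M[R]_n) :=
  forall x : 'rV[R]_n, x != 0 -> 0 < (x *m M *m x^T) 0 0.

Lemma posdef_gram_unit (R : numFieldType) n (Q : 'M[R]_n) :
  posdef (Q^T *m Q) -> Q \in unitmx.
Proof.
move=> pd; apply: contraT => nu.
have : kermx Q^T != 0 by rewrite kermx_eq0 row_free_unit unitmx_tr.
case/rowV0Pn => v /sub_kermxP vQ v0.
by have := pd v v0; rewrite mulmxA vQ !mul0mx mxE ltxx.
Qed.

Lemma posdef_perturbation (R : realFieldType) n (F : 'M[R]_n) :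
  exists2 t, 0 < t & posdef (1%:M + t *: F).
Proof.
(* |x F x^T| <= c |x|^2 with c the sum of the |F i j| *)
pose c := \sum_i \sum_j `|F i j|.
have c1_gt0 : 0 < 1 + c.
  by rewrite ltr_wpDr // sumr_ge0 // => i _; rewrite sumr_ge0.
exists (1 + c)^-1; first by rewrite invr_gt0.
move=> x x0; set s := (x *m x^T) 0 0.
have s_gt0 : 0 < s := mulmx_tr_gt0 x0.
have xs i j : `|x 0 i| * `|x 0 j| <= s.
  have xi k : `|x 0 k| ^+ 2 <= s.
    rewrite real_normK ?num_real // /s mulmx_trE (bigD1 k) //= lerDl.
    by rewrite sumr_ge0 // => l _; rewrite sqr_ge0.
  have := xi i; have := xi j; have := normr_ge0 (x 0 i); have := normr_ge0 (x 0 j).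
  nra.
have xFx : - (c * s) <= (x *m F *m x^T) 0 0.
  rewrite bilinmxE /c mulr_suml -sumrN; apply: ler_sum => i _.
  rewrite mulr_suml -sumrN; apply: ler_sum => j _.
  apply: lerNnormlW; rewrite !normrM mulrAC mulrC.
  by rewrite ler_wpM2l.
rewrite mulmxDr mulmxDl mulmx1 -scalemxAr -scalemxAl mxE [X in _ + X]mxE -/s.
have : (1 + c)^-1 * - (c * s) <= (1 + c)^-1 * (x *m F *m x^T) 0 0.
  by rewrite ler_wpM2l // ltW // invr_gt0.
have -> : (1 + c)^-1 * - (c * s) = s / (1 + c) - s.
  by field; rewrite gt_eqF.
have : 0 < s / (1 + c) by rewrite divr_gt0.
lra.
Qed.

Lemma invmxM (R : comUnitRingType) n (A B : 'M[R]_n) :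
  A \in unitmx -> B \in unitmx -> invmx (A *m B) = invmx B *m invmx A.
Proof.
move=> uA uB; have uAB : A *m B \in unitmx by rewrite unitmx_mul uA uB.
rewrite -[RHS]mul1mx -(mulVmx uAB) -!mulmxA (mulmxA B) mulmxV // mul1mx.
by rewrite mulmxV // mulmx1.
Qed.

Lemma mulmx_trmx_entry (R : pzRingType) m n k
    (M : 'M[R]_(m, k)) (S : 'M[R]_k) (N : 'M[R]_(n, k)) i j :
  (M *m S *m N^T) i j = (row i M *m S *m (row j N)^T) 0 0.
Proof.
rewrite !mxE; apply: eq_bigr => l _; rewrite !mxE; congr (_ * _).
by apply: eq_bigr => l' _; rewrite !mxE.
Qed.

Lemma congr_unit_eq0 (R : comUnitRingType) n (C E : 'M[R]_n) :
  C \in unitmx -> C *m E *m C^T = 0 -> E = 0.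
Proof.
move=> uC CEC; have uCT : C^T \in unitmx by rewrite unitmx_tr.
rewrite -(mulKmx uC E) -(mulmxK uCT (C *m E)) CEC.
by rewrite mul0mx mulmx0.
Qed.

Section Cholesky.
Variable R : rcfType.

Lemma sym_block_mxE n1 n2 (M : 'M[R]_(n1 + n2)) : M^T = M ->
  M = block_mx (ulsubmx M) (ursubmx M) (ursubmx M)^T (drsubmx M).
Proof.
by move=> Msym; rewrite -[in LHS](submxK M) trmx_ursub Msym.
Qed.

Lemma posdef_schur n a (b : 'rV[R]_n) (d : 'M[R]_n) :
  posdef (block_mx a%:M b b^T d) -> 0 < a /\ posdef (d - a^-1 *: (b^T *m b)).
Proof.
have quad u (y : 'rV[R]_n) :
    (row_mx u%:M y *m block_mx a%:M b b^T d *m (row_mx u%:M y)^T) 0 0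
    = u * a * u + 2 * u * (y *m b^T) 0 0 + (y *m d *m y^T) 0 0.
  rewrite tr_row_mx mul_row_block mul_row_col !mulmxDl tr_scalar_mx.
  rewrite -!scalar_mxM mul_mx_scalar -!mulmxA !mul_scalar_mx !mulmxA.
  rewrite -[b *m y^T]trmxK trmx_mul trmxK.
  move: (y *m b^T) (y *m d *m y^T) => p w.
  rewrite !mxE eqxx mulr1n.
  ring.
move=> pd.
have a_gt0 : 0 < a.
  have x0 : row_mx (1%:M : 'M_1) (0 : 'rV[R]_n) != 0.
    apply/eqP => /matrixP/(_ 0 (lshift n 0)).
    by rewrite row_mxEl !mxE /= => /eqP; rewrite oner_eq0.
  by have := pd _ x0; rewrite quad !mul0mx !mxE mulr0 mul1r mulr1 !addr0.
split=> // y y0.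
(* the first coordinate minimising the form, for the given tail y *)
have x0 : row_mx (- a^-1 * (y *m b^T) 0 0)%:M y != 0.
  apply: contraNneq y0 => h.
  by case: (eq_row_mx (etrans h (esym (row_mx0 _ _ _ _)))) => _ ->.
have := pd _ x0; rewrite quad mulmxBr mulmxBl -scalemxAr -scalemxAl.
rewrite mulmxA -(mulmxA (y *m b^T)) -[b *m y^T]trmxK trmx_mul trmxK.
move: (y *m b^T) (y *m d *m y^T) => p w.
rewrite !mxE big_ord1 !mxE.
have -> : forall z, - a^-1 * z * a * (- a^-1 * z) + 2 * (- a^-1 * z) * z + w 0 0
    = w 0 0 - a^-1 * (z * z).
  by move=> z; field; rewrite gt_eqF.
by [].
Qed.

Lemma cholesky n (M : 'M[R]_n) : M^T = M -> posdef M ->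
  exists Q : 'M[R]_n, M = Q^T *m Q.
Proof.
elim: n M => [|n IH] M Msym Mpd; first by exists 0; apply/matrixP => [[]].
move: M Msym Mpd; rewrite -[n.+1]/(1 + n)%N => M Msym.
rewrite (sym_block_mxE Msym) [ulsubmx M]mx11_scalar.
set a := ulsubmx M 0 0; set b := ursubmx M; set d := drsubmx M => Mpd.
have [a_gt0 Spd] := posdef_schur Mpd.
have dsym : d^T = d by rewrite /d trmx_drsub Msym.
have Ssym : (d - a^-1 *: (b^T *m b))^T = d - a^-1 *: (b^T *m b).
  by rewrite linearB /= linearZ /= trmx_mul trmxK dsym.
have [L eL] := IH _ Ssym Spd.
pose r := Num.sqrt a.
have r_neq0 : r != 0 by rewrite gt_eqF // sqrtr_gt0.
have rr : r * r = a by rewrite -expr2 sqr_sqrtr // ltW.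
exists (block_mx r%:M (r^-1 *: b) 0 L).
rewrite tr_block_mx mulmx_block !trmx0 !mul0mx !mulmx0 !addr0 tr_scalar_mx.
rewrite -scalar_mxM rr mul_scalar_mx !linearZ /= mul_mx_scalar.
rewrite !scalerA mulVf // mulfV // !scale1r -eL.
by rewrite -scalemxAl scalerA -invfM rr addrC subrK.
Qed.

End Cholesky.

Definition lower_pairs n := [pred p : 'I_n * 'I_n | (p.2 <= p.1)%N].

Lemma card_lower_pairs n : #|lower_pairs n| = ((n * n.+1) %/ 2)%N.
Proof.
rewrite -sum1_card.
have -> : (\sum_(p in lower_pairs n) 1 = \sum_(i < n) \sum_(j < n | (j < i.+1)%N) 1)%N.
  by rewrite pair_big_dep; apply: eq_bigl => p.
have -> : (\sum_(i < n) \sum_(j < n | (j < i.+1)%N) 1 = \sum_(i < n) i.+1)%N.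
  apply: eq_bigr => i _.
  rewrite (big_ord_narrow_cond (P := predT) (F := fun _ => 1%N) (ltn_ord i)).
  by rewrite sum1_card card_ord.
have := bin2_sum n.+1; rewrite big_mkord big_ord_recl /= add0n bin2 -divn2 mulnC.
by move=> <-; apply: eq_bigr.
Qed.

Section SymmetricVectors.
Variables (R : realFieldType) (n : nat).

Definition symvec (u : 'rV[R]_(n * n)) := (vec_mx u)^T = vec_mx u.

Lemma symvecP u :
  symvec u <-> forall i j, u 0 (mxvec_index i j) = u 0 (mxvec_index j i).
Proof.
split=> [uS i j|uS]; last by apply/matrixP => i j; rewrite !mxE uS.
by have /matrixP/(_ j i) := uS; rewrite !mxE.
Qed.

Definition sym_basis : 'M[R]_(#|lower_pairs n|, n * n) :=
  \matrix_r mxvec (delta_mx (enum_val r).1 (enum_val r).2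
                   + delta_mx (enum_val r).2 (enum_val r).1).

Lemma sym_basisE r i j :
  sym_basis r (mxvec_index i j) = ((i, j) == enum_val r)%:R + ((j, i) == enum_val r)%:R.
Proof.
by rewrite mxE mxvecE !mxE; case: (enum_val r) => a b; rewrite !xpair_eqE [(j == a) && _]andbC.
Qed.

Lemma sym_basis_symvec u : (u <= sym_basis)%MS -> symvec u.
Proof.
case/submxP => w ->; apply/symvecP => i j.
by rewrite !mxE; apply: eq_bigr => r _; rewrite !sym_basisE addrC.
Qed.

Lemma lower_pairs_swap (p q : 'I_n * 'I_n) :
  p \in lower_pairs n -> q \in lower_pairs n -> (p.2, p.1) = q -> q = p.
Proof.
case: p => a b lp lq eq; subst q; move: lp lq; rewrite !inE /= => ba ab.
by have -> : a = b by apply/val_inj/eqP; rewrite eqn_leq ab ba.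
Qed.

Lemma sym_basis_free : row_free sym_basis.
Proof.
apply: inj_row_free => v v0; apply/rowP => r0.
have /= lp0 := enum_valP r0; set p := enum_val r0 in lp0 *.
have /rowP/(_ (mxvec_index p.1 p.2)) := v0.
rewrite !mxE (bigD1 r0) //= big1 => [|r nr]; last first.
  have neq : enum_val r != p by apply: contra nr => /eqP/enum_val_inj ->.
  have swap_neq : (p.2, p.1) != enum_val r.
    by apply: contra neq => /eqP/(lower_pairs_swap lp0 (enum_valP r)) ->.
  rewrite sym_basisE -surjective_pairing eq_sym (negbTE neq) (negbTE swap_neq).
  by rewrite addr0 mulr0.
rewrite sym_basisE -surjective_pairing eqxx addr0 => /eqP; rewrite mulf_eq0.
by case/orP=> [/eqP //|]; rewrite gt_eqF // ltr_pwDl.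
Qed.

Lemma sum_lower_pairs_eq (F : 'I_n * 'I_n -> R) x :
  \sum_(p in lower_pairs n) F p * (x == p)%:R = if x \in lower_pairs n then F x else 0.
Proof.
rewrite big_mkcond (bigD1 x) //= big1 => [|p /negbTE xp]; last first.
  by rewrite eq_sym xp mulr0 if_same.
by rewrite eqxx mulr1 addr0.
Qed.

Lemma symvec_sym_basis u : symvec u -> (u <= sym_basis)%MS.
Proof.
move/symvecP => uS.
pose g (p : 'I_n * 'I_n) := u 0 (mxvec_index p.1 p.2) / (1 + (p.1 == p.2 :> nat)%:R).
apply/submxP; exists (\row_r g (enum_val r)); apply/rowP => k.
case/mxvec_indexP: k => i j; rewrite mxE.
under eq_bigr => r _ do rewrite mxE sym_basisE.
rewrite -(big_enum_val (fun p => g p * (((i, j) == p)%:R + ((j, i) == p)%:R))).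
under eq_bigr do rewrite mulrDr.
rewrite big_split !sum_lower_pairs_eq !inE /g /= [(j == i :> nat)]eq_sym.
case: ltngtP => [_|_|/val_inj ->].
- by rewrite !addr0 divr1.
- by rewrite add0r addr0 divr1 uS.
- exact: splitr.
Qed.

Lemma rank_sym_basis : \rank sym_basis = ((n * n.+1) %/ 2)%N.
Proof. by rewrite (eqP sym_basis_free) card_lower_pairs. Qed.

Lemma rank_symvec_rows m (U : 'M[R]_(m, n * n)) : (forall j, symvec (row j U)) ->
  \rank U = ((n * n.+1) %/ 2)%N <-> forall u, symvec u -> u *m U^T = 0 -> u = 0.
Proof.
move=> Usym; have U_sym : (U <= sym_basis)%MS.
  by apply/row_subP => j; apply: symvec_sym_basis.
split=> [rU u uS uU|Uker].
  have : (u <= U)%MS.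
    apply: submx_trans (symvec_sym_basis uS) _.
    by rewrite -(mxrank_leqif_sup U_sym) rU rank_sym_basis.
  case/submxP => w uw; apply/eqP; rewrite -mulmx_tr_eq0.
  have UuT : U *m u^T = (u *m U^T)^T by rewrite trmx_mul trmxK.
  by rewrite {1}uw -mulmxA UuT uU trmx0 mulmx0 mxE.
apply/eqP; rewrite eqn_leq -{1}rank_sym_basis mxrankS //= leqNgt; apply/negP => ltU.
set Z := (sym_basis :&: kermx U^T)%MS.
have : (0 < \rank Z)%N.
  have := mxrank_sum_cap sym_basis (kermx U^T).
  have := rank_leq_col (sym_basis + kermx U^T)%MS; have := rank_leq_col U.
  by move: ltU; rewrite mxrank_ker mxrank_tr rank_sym_basis -/Z; lia.
rewrite lt0n mxrank_eq0 => /rowV0Pn [v vZ]; apply/negP/negPn/eqP.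
apply: Uker; first exact/sym_basis_symvec/(submx_trans vZ)/capmxSl.
exact/sub_kermxP/(submx_trans vZ)/capmxSr.
Qed.

End SymmetricVectors.

Section Entries.
Variable R : realType.

Lemma mxeE m n (M : 'M[R]_(m, n)) (i : 'I_m) (j : 'I_n) : mxe M i j = M i j.
Proof. by rewrite /mxe !valK. Qed.

Lemma mxe_tr m n (M : 'M[R]_(m, n)) i j : mxe M^T i j = mxe M j i.
Proof.
rewrite /mxe; case: (insub j : option 'I_m) => [j'|]; last by case: insub.
by case: (insub i : option 'I_n) => [i'|] //; rewrite mxE.
Qed.

Lemma mxeD m n (M N : 'M[R]_(m, n)) i j :
  mxe (M + N) i j = mxe M i j + mxe N i j.
Proof.
rewrite /mxe; case: (insub i : option 'I_m) => [i'|]; last by rewrite addr0.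
by case: (insub j : option 'I_n) => [j'|]; rewrite ?mxE ?addr0.
Qed.

Lemma mxeZ m n a (M : 'M[R]_(m, n)) i j : mxe (a *: M) i j = a * mxe M i j.
Proof.
rewrite /mxe; case: (insub i : option 'I_m) => [i'|]; last by rewrite mulr0.
by case: (insub j : option 'I_n) => [j'|]; rewrite ?mxE ?mulr0.
Qed.

Lemma mulmx_pidE m p D (leDp : (D <= p)%N) (M : 'M[R]_(m, p)) i k :
  (M *m pid_mx D) i k = M i (widen_ord leDp k).
Proof.
rewrite mxE (bigD1 (widen_ord leDp k)) //= big1 => [|j /negbTE jk]; last first.
  by rewrite mxE (_ : (j == k :> nat) = false) ?mulr0 // -jk.
by rewrite mxE eqxx /= ltn_ord mulr1 addr0.
Qed.

Lemma rowD_pid p q D (leDq : (D <= q)%N) (A : 'M[R]_(p, q)) (i : 'I_p) :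
  rowD D A i = row i (A *m pid_mx D).
Proof.
apply/rowP => l; rewrite [LHS]mxE [RHS]mxE mulmx_pidE.
exact: (mxeE A i (widen_ord leDq l)).
Qed.

Lemma topleft_pid p q D (leDp : (D <= p)%N) (leDq : (D <= q)%N) (A : 'M[R]_(p, q)) :
  topleft D A = (pid_mx D)^T *m A *m pid_mx D.
Proof.
apply/matrixP => k l; rewrite mulmx_pidE -[_ *m A]trmxK trmx_mul trmxK.
rewrite [LHS]mxE [RHS]mxE mulmx_pidE mxE.
exact: (mxeE A (widen_ord leDp k) (widen_ord leDq l)).
Qed.

Lemma topleft_tr D m n (A : 'M[R]_(m, n)) : topleft D A^T = (topleft D A)^T.
Proof. by apply/matrixP => k l; rewrite !mxE mxe_tr. Qed.

End Entries.

Section ConstraintMatrix.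
Variable R : realType.

Lemma mxvec_dot m n (A B : 'M[R]_(m, n)) :
  (mxvec A *m (mxvec B)^T) 0 0 = \tr (A *m B^T).
Proof.
rewrite mxE (reindex (uncurry (@mxvec_index m n))) /=; last exact: curry_mxvec_bij.
rewrite /mxtrace; under [RHS]eq_bigr => i _ do rewrite mxE.
by rewrite pair_bigA; apply: eq_bigr => -[i j] _ /=; rewrite mxE !mxvecE mxE.
Qed.

Lemma Mcal_mul s D m n J (A : 'M[R]_(m, n)) (theta : 'I_J -> nat * nat)
  (u : 'rV[R]_(D * D)) j :
  (u *m Mcal s D A theta) 0 j = \tr (vec_mx u *m Nsh s D A (theta j)).
Proof.
rewrite -{1}(vec_mxK u) -[Nsh _ _ _ _]trmxK -mxvec_dot !mxE.
by apply: eq_bigr => k _; rewrite !mxE.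
Qed.

Lemma Nsh_sym s D m n (A : 'M[R]_(m, n)) p : (Nsh s D A p)^T = Nsh s D A p.
Proof. by case: s; rewrite /= /Nst /Nm linearZ linearD /= !trmx_mul !trmxK addrC. Qed.

Lemma Nst_trace D m n (A : 'M[R]_(m, n)) p (E : 'M[R]_D) : E^T = E ->
  \tr (E *m Nst D A p) = (rowD D A p.1 *m E *m (rowD D A p.2)^T) 0 0.
Proof.
move=> Esym; set r1 := rowD D A p.1; set r2 := rowD D A p.2.
have swap : (r2 *m E *m r1^T) 0 0 = (r1 *m E *m r2^T) 0 0.
  have -> : r2 *m E *m r1^T = (r1 *m E *m r2^T)^T.
    by rewrite !trmx_mul !trmxK Esym mulmxA.
  by rewrite mxE.
rewrite /Nst -scalemxAr mxtraceZ mulmxDr mxtraceD !mulmxA.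
rewrite mxtrace_mulC [\tr (_ *m r1)]mxtrace_mulC !mulmxA !trace_mx11 swap.
by rewrite -/r2; field.
Qed.

Lemma rank_Mcal_full s D m n J (A : 'M[R]_(m, n)) (theta : 'I_J -> nat * nat) :
  \rank (Mcal s D A theta) = ((D * D.+1) %/ 2)%N <->
  (forall E : 'M[R]_D, E^T = E ->
     (forall j, \tr (E *m Nsh s D A (theta j)) = 0) -> E = 0).
Proof.
have rows_sym j : symvec (row j (Mcal s D A theta)^T).
  apply/symvecP => i l; rewrite !mxE !mxvecE !mxE.
  by rewrite -[in LHS](Nsh_sym s D A (theta j)) mxE.
rewrite -mxrank_tr (rank_symvec_rows rows_sym) trmxK.
split=> [Mker E Esym EN|Mker u uS uM].
  rewrite -(mxvecK E) (Mker (mxvec E)) ?linear0 //; first by rewrite /symvec mxvecK.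
  by apply/rowP => j; rewrite Mcal_mul mxvecK EN mxE.
rewrite -(vec_mxK u) (Mker _ uS) ?linear0 // => j.
by rewrite -Mcal_mul uM mxE.
Qed.

Lemma Mcal_Mo D m n J (A : 'M[R]_(m, n)) (theta : 'I_J -> nat * nat) :
  Mcal Mo D A theta = Mcal St D A^T theta.
Proof.
have colD_rowD l : colD D A l = (rowD D A^T l)^T.
  by apply/matrixP => k z; rewrite !mxE mxe_tr.
by apply/matrixP => k j; rewrite !mxE /= /Nm /Nst !colD_rowD !trmxK.
Qed.

End ConstraintMatrix.

Section StFactors.
Variables (R : realType) (D p q J : nat) (A : 'M[R]_(p, q)).
Variables (theta : 'I_J -> nat * nat) (c : 'I_J -> R).
Hypotheses (leDp : (D <= p)%N) (leDq : (D <= q)%N).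
Hypothesis rank_topleft : \rank (topleft D A) = D.
Hypothesis theta_lt : forall j, ((theta j).1 < p)%N /\ ((theta j).2 < p)%N.

Definition st_factor (X : 'M[R]_(D, p)) (Y : 'M[R]_(D, q)) :=
  X^T *m Y = A /\ forall j, mxe (X^T *m X) (theta j).1 (theta j).2 = c j.

Definition lead_gram (Y : 'M[R]_(D, q)) : 'M[R]_D :=
  (Y *m pid_mx D)^T *m (Y *m pid_mx D).

Local Notation AD := (A *m pid_mx D).
Local Notation K := (invmx (topleft D A) *m (pid_mx D)^T *m A).

Lemma topleft_unit : topleft D A \in unitmx.
Proof. by rewrite -row_full_unit /row_full rank_topleft. Qed.

Section Factorization.
Variables (X : 'M[R]_(D, p)) (Y : 'M[R]_(D, q)).
Hypothesis XY : X^T *m Y = A.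

Lemma topleft_factor : topleft D A = (X *m pid_mx D)^T *m (Y *m pid_mx D).
Proof. by rewrite (topleft_pid leDp leDq) -XY trmx_mul !mulmxA. Qed.

Lemma lead_unit : X *m pid_mx D \in unitmx /\ Y *m pid_mx D \in unitmx.
Proof.
by have := topleft_unit; rewrite topleft_factor unitmx_mul unitmx_tr => /andP[].
Qed.

Lemma trmx_factorE : X^T = AD *m invmx (Y *m pid_mx D).
Proof. by rewrite -XY -(mulmxA X^T) mulmxK //; case: lead_unit. Qed.

Lemma factorYE : Y = Y *m pid_mx D *m K.
Proof.
have [uC _] := lead_unit; have uCT : (X *m pid_mx D)^T \in unitmx by rewrite unitmx_tr.
apply: (can_inj (mulKmx uCT)).
rewrite !mulmxA -(mulmxA _ Y) -topleft_factor mulmxV ?topleft_unit // mul1mx.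
by rewrite trmx_mul -mulmxA XY.
Qed.

Lemma gram_factorX : X^T *m X = AD *m invmx (lead_gram Y) *m AD^T.
Proof.
have [_ uB] := lead_unit.
rewrite -[X in _ *m X]trmxK trmx_factorE /lead_gram invmxM ?unitmx_tr //.
by rewrite trmx_mul trmx_inv !mulmxA.
Qed.

Lemma gram_factorY : Y^T *m Y = K^T *m lead_gram Y *m K.
Proof. by rewrite {1 2}factorYE trmx_mul !mulmxA. Qed.

End Factorization.

Lemma lead_gram_sym Y : (lead_gram Y)^T = lead_gram Y.
Proof. by rewrite /lead_gram trmx_mul trmxK. Qed.

Lemma form_entry_trace (E : 'M[R]_D) j : E^T = E ->
  mxe (AD *m E *m AD^T) (theta j).1 (theta j).2 = \tr (E *m Nst D A (theta j)).
Proof.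
have [lt1 lt2] := theta_lt j.
move=> Esym; rewrite (Nst_trace _ _ Esym) (mxeE _ (Ordinal lt1) (Ordinal lt2)).
by rewrite mulmx_trmx_entry -!(rowD_pid leDq).
Qed.

Lemma st_factor_trace X Y j : st_factor X Y ->
  \tr (invmx (lead_gram Y) *m Nst D A (theta j)) = c j.
Proof.
case=> XY <-; rewrite (gram_factorX XY) form_entry_trace //.
by rewrite trmx_inv lead_gram_sym.
Qed.

Lemma topleft_form_eq0 (E : 'M[R]_D) : AD *m E *m AD^T = 0 -> E = 0.
Proof.
move=> AEA; apply: (congr_unit_eq0 topleft_unit).
rewrite (topleft_pid leDp leDq).
have -> : forall P : 'M[R]_(p, D),
    P^T *m A *m pid_mx D *m E *m (P^T *m A *m pid_mx D)^T = P^T *m (AD *m E *m AD^T) *m P.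
  by move=> P; rewrite !trmx_mul !trmxK !mulmxA.
by rewrite AEA mulmx0 mul0mx.
Qed.

Lemma st_factor_perturb X0 Y0 (E : 'M[R]_D) : st_factor X0 Y0 -> E^T = E ->
  (forall j, \tr (E *m Nst D A (theta j)) = 0) ->
  exists2 t, 0 < t &
    exists X Y, st_factor X Y /\ X^T *m X = X0^T *m X0 + t *: (AD *m E *m AD^T).
Proof.
case=> XY0 c0 Esym EN; have [_ uB] := lead_unit XY0.
move: (Y0 *m pid_mx D) uB (trmx_factorE XY0) => B uB X0T.
set F := B *m E *m B^T.
have [t t_gt0 pd] := posdef_perturbation F.
have Ssym : (1%:M + t *: F)^T = 1%:M + t *: F.
  by rewrite linearD linearZ /= tr_scalar_mx /F trmx_mul (trmx_mul B) trmxK Esym mulmxA.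
have [Q eQ] := cholesky Ssym pd.
have uQ : Q \in unitmx by apply: posdef_gram_unit; rewrite -eQ.
have X0FX0 : X0^T *m F *m X0 = AD *m E *m AD^T.
  rewrite -[X0 in _ *m X0]trmxK X0T /F trmx_mul trmx_inv !mulmxA.
  by rewrite mulmxKV // mulmxK ?unitmx_tr.
exists t => //; exists (Q *m X0), ((invmx Q)^T *m Y0).
have XX : (Q *m X0)^T *m (Q *m X0) = X0^T *m X0 + t *: (AD *m E *m AD^T).
  rewrite trmx_mul mulmxA -(mulmxA X0^T) -eQ mulmxDr mulmx1 mulmxDl.
  by rewrite -scalemxAr -scalemxAl X0FX0.
split=> //; split=> [|j].
  by rewrite trmx_mul -mulmxA (mulmxA Q^T) -trmx_mul mulVmx // trmx1 mul1mx.
by rewrite XX mxeD mxeZ c0 form_entry_trace // EN mulr0 addr0.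
Qed.

Theorem st_gram_unique_iff X0 Y0 : st_factor X0 Y0 ->
  (forall X Y X' Y', st_factor X Y -> st_factor X' Y' ->
     X^T *m X = X'^T *m X' /\ Y^T *m Y = Y'^T *m Y') <->
  \rank (Mcal St D A theta) = ((D * D.+1) %/ 2)%N.
Proof.
move=> f0; rewrite rank_Mcal_full; split=> [gram_uniq E Esym EN|Mker X Y X' Y' f f'].
  have [t t_gt0 [X [Y [f XX]]]] := st_factor_perturb f0 Esym EN.
  have [/esym XX0 _] := gram_uniq _ _ _ _ f0 f.
  have /addrI tZ : X0^T *m X0 + t *: (AD *m E *m AD^T) = X0^T *m X0 + 0.
    by rewrite addr0 -XX.
  apply: topleft_form_eq0.
  by rewrite -[LHS]scale1r -(mulVf (lt0r_neq0 t_gt0)) -scalerA tZ scaler0.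
have L : invmx (lead_gram Y) = invmx (lead_gram Y').
  apply/eqP; rewrite -subr_eq0; apply/eqP/Mker => [|j].
    by rewrite linearB /= !trmx_inv !lead_gram_sym.
  by rewrite mulmxBl linearB /= (st_factor_trace j f) (st_factor_trace j f') subrr.
have [[XY _] [X'Y' _]] := (f, f'); split.
  by rewrite (gram_factorX XY) (gram_factorX X'Y') L.
by rewrite (gram_factorY XY) (gram_factorY X'Y') -[lead_gram Y]invmxK L invmxK.
Qed.

End StFactors.

Lemma unique_image_iff (T1 T2 U : Type) (P : T1 -> T2 -> Prop) (f : T1 -> T2 -> U)
    (Q S : U -> Prop) (eqv : T1 -> T2 -> T1 -> T2 -> Prop) x0 y0 :
  (forall u, Q u <-> exists x y, u = f x y /\ P x y) ->
  (forall x y, P x y -> S (f x y)) ->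
  (forall x y x' y', P x y -> P x' y' -> f x y = f x' y' <-> eqv x y x' y') ->
  P x0 y0 ->
  (exists! u, S u /\ Q u) <-> forall x y x' y', P x y -> P x' y' -> eqv x y x' y'.
Proof.
move=> QP SP feq P0; have Qf x y : P x y -> S (f x y) /\ Q (f x y).
  by move=> Pxy; split; [apply: SP | apply/QP; exists x, y].
split=> [[u [_ u_uniq]] x y x' y' Pxy Pxy'|all_eqv].
  by apply/feq => //; rewrite -(u_uniq _ (Qf _ _ Pxy)) -(u_uniq _ (Qf _ _ Pxy')).
exists (f x0 y0); split=> [|u [_ /QP[x [y [-> Pxy]]]]]; first exact: Qf.
by apply/feq => //; apply: all_eqv.
Qed.

Section Compatibility.
Variable R : realType.

Lemma gram_row_mx D p q (X : 'M[R]_(D, p)) (Y : 'M[R]_(D, q)) :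
  (row_mx X Y)^T *m row_mx X Y = block_mx (X^T *m X) (X^T *m Y) (Y^T *m X) (Y^T *m Y).
Proof. by rewrite tr_row_mx mul_col_row. Qed.

Lemma gram_row_mx_eq D p q (X X' : 'M[R]_(D, p)) (Y Y' : 'M[R]_(D, q)) :
  X^T *m Y = X'^T *m Y' ->
  (row_mx X Y)^T *m row_mx X Y = (row_mx X' Y')^T *m row_mx X' Y' <->
  X^T *m X = X'^T *m X' /\ Y^T *m Y = Y'^T *m Y'.
Proof.
move=> XY; have YX : Y^T *m X = Y'^T *m X'.
  by apply: (can_inj (@trmxK _ _ _)); rewrite !trmx_mul !trmxK XY.
rewrite !gram_row_mx; split.
  by case/eq_block_mx => -> _ _ ->.
by case=> -> ->; rewrite XY YX.
Qed.

Lemma rank_gram_row_mx D p q (X : 'M[R]_(D, p)) (Y : 'M[R]_(D, q)) :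
  \rank (X^T *m Y) = D -> \rank ((row_mx X Y)^T *m row_mx X Y) = D.
Proof.
move=> rXY; apply/eqP.
rewrite eqn_leq (leq_trans (mxrankM_maxr _ _)) ?rank_leq_row //=.
rewrite -[X in (X <= _)%N]rXY.
have <- : row_mx 1%:M 0 *m ((row_mx X Y)^T *m row_mx X Y) *m col_mx 0 1%:M = X^T *m Y.
  rewrite gram_row_mx mul_row_block mul_row_col !mul1mx !mul0mx !addr0.
  by rewrite mulmx0 add0r mulmx1.
exact: leq_trans (mxrankM_maxl _ _) (mxrankM_maxr _ _).
Qed.

Variables (D W n J : nat) (A : 'M[R]_(W, n)) (theta : 'I_J -> nat * nat) (c : 'I_J -> R).

Lemma compatible_St (G : 'M[R]_(W + n)) : compatible St D A theta c G <->
  exists (X : 'M[R]_(D, W)) (Y : 'M[R]_(D, n)),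
    G = (row_mx X Y)^T *m row_mx X Y /\ st_factor A theta c X Y.
Proof. by split=> [[X [Y [-> XY Xc]]]|[X [Y [-> [XY Xc]]]]]; exists X, Y. Qed.

Lemma compatible_Mo (G : 'M[R]_(W + n)) : compatible Mo D A theta c G <->
  exists (X : 'M[R]_(D, n)) (Y : 'M[R]_(D, W)),
    G = (row_mx Y X)^T *m row_mx Y X /\ st_factor A^T theta c X Y.
Proof.
split=> [[Y [X [-> YX Xc]]]|[X [Y [-> [XY Xc]]]]].
  by exists X, Y; split=> //; split=> //; rewrite -YX trmx_mul trmxK.
by exists Y, X; split=> //; rewrite -[A]trmxK -XY trmx_mul trmxK.
Qed.

End Compatibility.

Theorem theorem2 (R : realType) (D W V K J : nat)
  (hD : (0 < D)%N) (hW : (0 < W)%N) (hV : (0 < V)%N) (hK : (0 < K)%N)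
  (A : 'M[R]_(W, V * K))
  (hrank : \rank A = D) (hsub : \rank (topleft D A) = D)
  (s : sharp) (theta : 'I_J -> nat * nat)
  (htheta : forall j : 'I_J,
     ((theta j).1 < bnd s W (V * K))%N /\ ((theta j).2 < bnd s W (V * K))%N)
  (c : 'I_J -> R)
  (hex : exists G : 'M[R]_(W + V * K), @compatible R s D W (V * K) J A theta c G) :
  (exists! G : 'M[R]_(W + V * K), \rank G = D /\ @compatible R s D W (V * K) J A theta c G) <->
  \rank (Mcal s D A theta) = ((D * D.+1) %/ 2)%N.
Proof.
have leDW : (D <= W)%N by rewrite -hrank rank_leq_row.
have leDVK : (D <= V * K)%N by rewrite -hrank rank_leq_col.
case: s htheta hex => htheta [G0].
  case/compatible_St => [X0 [Y0 [_ f0]]].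
  rewrite -(st_gram_unique_iff leDW leDVK hsub htheta f0).
  apply: (unique_image_iff (compatible_St _ _ _ _) _ _ f0).
    by move=> X Y [XY _]; rewrite rank_gram_row_mx // XY.
  by move=> X Y X' Y' [XY _] [X'Y' _]; apply: gram_row_mx_eq; rewrite XY X'Y'.
have hsubT : \rank (topleft D A^T) = D by rewrite topleft_tr mxrank_tr.
case/compatible_Mo => [X0 [Y0 [_ f0]]].
rewrite Mcal_Mo -(st_gram_unique_iff leDVK leDW hsubT htheta f0).
apply: (unique_image_iff (compatible_Mo _ _ _ _) _ _ f0).
  by move=> X Y [XY _]; rewrite rank_gram_row_mx // -mxrank_tr trmx_mul trmxK XY mxrank_tr.
move=> X Y X' Y' [XY _] [X'Y' _]; apply: iff_trans (and_comm _ _).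
apply: gram_row_mx_eq; apply: (can_inj (@trmxK _ _ _)).
by rewrite !trmx_mul !trmxK XY X'Y'.
Qed.
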